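(* Let $G=(V,E)$ be a tree on $n$ vertices, let $P$ be any valid search tree on $G$, and let $X=x_1,\dots,x_m$ be any sequence of vertices of $G$. Then $$\mathrm{OPT}(G,X)\;\ge\; \frac{I(G,P,X)}{2}-n .$$
   Context: Search tree on a tree: a rooted tree $T$ is a valid search tree on an unrooted tree $G$ if the root $r$ of $T$ is a vertex of $G$ and the subtrees of $T\setminus r$ are valid search trees on the connected components of $G\setminus r$ (there are no degree restrictions and no order among children). Rotation on a non-root node $v$ of $T$ with parent $p$: swap $p$ and $v$ (so $v$ takes $p$'s place and $p$ becomes a child of $v$); all children of $p$ remain children of $p$; for a child $u$ of $v$ with subtree node set $S_u$, if some node of $S_u$ is adjacent to $p$ in $G$ (this happens for at most one child) then $u$ becomes a child of $p$; all other children of $v$ remain children of $v$. GST model: a valid search tree $T$ on $G$ is maintained with a single pointer; at unit cost one may move the pointer to a child or the parent of the current node, or rotate the current node. A search for $v\in V$ is any sequence of unit-cost operations in which the pointer starts at the root of the current tree and points to $v$ at some point. $\mathrm{OPT}(G,X)$ is the minimum total number of unit-cost operations of any GST-model algorithm (even one knowing $X$ in advance) executing the searches $x_1,\dots,x_m$ in order, starting from any initial valid search tree on $G$. Preferred child: for a fixed search tree $P$ on $G$ and a non-leaf node $y$ of $P$ with children $y_1,\dots,y_d$ (with $y_1$ a fixed designated child), at time $t\in\{1,\dots,m\}$ the preferred child of $y$ is the child $y_i$ whose subtree $P(y_i)$ contains the most recent searched vertex among $x_1,\dots,x_t$ lying in the subtree $P(y)$; it is undefined if no such search exists, and if that most recent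 search is to $y$ itself, the preferred child is $y_1$. Interleave bound: the interleave bound of a node $y$ of $P$ is the number of times its preferred child changes over times $1,2,\dots,m$; $I(G,P,X)$ is the sum of the interleave bounds of all nodes of $P$ (here $P$ is fixed and does not change). *)

From HB Require Import structures.
From mathcomp Require Import all_boot all_order all_algebra.
From Stdlib Require List.
Set Implicit Arguments. Unset Strict Implicit. Unset Printing Implicit Defensive.

Section SearchTrees.
Variables (V : finType) (e : rel V).

Definition is_tree : Prop :=
  [/\ symmetric e, irreflexive e, 0 < #|V|,
      (forall x y, connect e x y) &
      (forall c : seq V, uniq c -> 2 < size c -> ~~ cycle e c)].

Definition restr (S : {set V}) : rel V := [rel a b | [&& a \in S, b \in S & e a b]].
Definition comp (S : {set V}) (x : V) : {set V} := [set y in S | connect (restr S) x y].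
Definition components (S : {set V}) : {set {set V}} := [set comp S x | x in S].

Inductive rtree := RNode of V & seq rtree.

Definition rlabel (t : rtree) : V := let: RNode r _ := t in r.

Fixpoint nodes (t : rtree) : {set V} :=
  let: RNode r ts := t in
  r |: (fix go (ts : seq rtree) : {set V} :=
          match ts with [::] => set0 | t' :: ts' => nodes t' :|: go ts' end) ts.

Inductive valid_st : {set V} -> rtree -> Prop :=
| VNode (S : {set V}) (r : V) (ts : seq rtree) :
    r \in S ->
    uniq (map nodes ts) ->
    [set:: map nodes ts] = components (S :\ r) ->
    (forall t', List.In t' ts -> valid_st (nodes t') t') ->
    valid_st S (RNode r ts).

(* parent function of a rooted tree: None for the root (and for non-nodes) *)
Fixpoint par_in (t : rtree) (u : V) : option V :=
  let: RNode r ts := t in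
  (fix go (ts : seq rtree) : option V :=
     match ts with
     | [::] => None
     | t' :: ts' =>
         if rlabel t' == u then Some r
         else match par_in t' u with Some x => Some x | None => go ts' end
     end) ts.

(* A search tree is represented by its parent function (children unordered);
   it is a valid search tree on G if it is the parent function of some valid tree. *)
Definition is_st (p : V -> option V) : Prop :=
  exists t, valid_st [set: V] t /\ forall u, par_in t u = p u.

Definition desc (p : V -> option V) (u : V) : {set V} :=
  [set w | connect [rel a b | p a == Some b] w u].

Definition rotate (p : V -> option V) (v : V) : V -> option V :=
  match p v with
  | None => p
  | Some q => fun w =>
      if w == v then p q
      else if w == q then Some v
      else if (p w == Some v) && [exists y in desc p w, e y q] then Some q
      else p w
  end.

Definition state := ((V -> option V) * V)%type.

Inductive step : state -> state -> Prop :=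
| step_child p x u : p u = Some x -> step (p, x) (p, u)
| step_parent p x q : p x = Some q -> step (p, x) (p, q)
| step_rotate p x q : p x = Some q -> step (p, x) (rotate p x, x).

Fixpoint chain (s0 : state) (ss : seq state) : Prop :=
  match ss with [::] => True | s :: ss' => step s0 s /\ chain s ss' end.

(* a search for x starting in tree p: a sequence ss of unit-cost operations (states
   after each operation), pointer starting at the root, visiting x at some point;
   p' is the resulting tree; the cost is size ss *)
Definition search (p : V -> option V) (x : V) (ss : seq state) (p' : V -> option V) : Prop :=
  exists r, p r = None /\ chain (p, r) ss /\
    (r = x \/ has (fun s : state => s.2 == x) ss) /\ p' = (last (p, r) ss).1.

Inductive exec : (V -> option V) -> seq V -> nat -> Prop :=
| exec_nil p : exec p [::] 0
| exec_cons p x xs ss p' c :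
    search p x ss p' -> exec p' xs c -> exec p (x :: xs) (size ss + c).

(* c is the total cost of some GST algorithm executing X from some valid initial tree;
   OPT(G,X) is the minimum of such c *)
Definition gst_cost (X : seq V) (c : nat) : Prop :=
  exists p0, is_st p0 /\ exec p0 X c.

Definition child_toward (P : V -> option V) (y x : V) : option V :=
  [pick c | (P c == Some y) && (x \in desc P c)].

Definition is_leaf (P : V -> option V) (y : V) : bool := ~~ [exists c, P c == Some y].

(* preferred child of y at time t (1 <= t <= m); d y is the designated child y_1 *)
Definition pref (P : V -> option V) (d : V -> V) (X : seq V) (y : V) (t : nat) : option V :=
  if is_leaf P y then None else
  let s := [seq x <- take t X | x \in desc P y] in
  match s with
  | [::] => None
  | x0 :: _ => let x := last x0 s in
               if x == y then Some (d y) else child_toward P y x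
  end.

Definition ib_node (P : V -> option V) (d : V -> V) (X : seq V) (y : V) : nat :=
  \sum_(1 <= t < size X)
     [&& pref P d X y t != None, pref P d X y t.+1 != None &
         pref P d X y t != pref P d X y t.+1].

Definition interleave (P : V -> option V) (d : V -> V) (X : seq V) : nat :=
  \sum_(y : V) ib_node P d X y.

End SearchTrees.

From Pilot Require Import Defs.
From HB Require Import structures.
From mathcomp Require Import all_boot all_order all_algebra.
From mathcomp Require Import zify lra.
From Stdlib Require Import FunctionalExtensionality.
Set Implicit Arguments. Unset Strict Implicit. Unset Printing Implicit Defensive.

(* We prove the stronger bound  I(G,P,X) <= 2 * OPT(G,X)  by a potential argument.  A valid search tree on the tree G is acyclic and every edge
   of G joins an ancestor/descendant pair; rotations preserve both properties.  For
   a node y of the reference tree P let [Psub y] be the vertex set of P(y); it is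
   connected in G, so in any valid search tree p it has a unique highest vertex, and
   [top_part p y] is the "part" of P(y) (the child subtree P(y_i), or y_1 for y
   itself) containing that vertex.  The potential of y is 1 when the preferred child
   of y is defined and differs from [top_part p y].  Every unit-cost operation moves
   the pointer into a part that becomes the new top for at most one y, or rotates,
   which changes [top_part] for at most one y; charging 2 per operation pays both for
   the changes of [top_part] and for every change of a preferred child. *)

Section AncestorOrder.
Variable V : finType.

Definition parent_rel (p : V -> option V) : rel V := [rel a b | p a == Some b].

Definition below (p : V -> option V) (a b : V) : bool := connect (parent_rel p) a b.

Lemma in_desc p w u : (w \in desc p u) = below p w u.
Proof. by rewrite inE. Qed.

Lemma connect_ind (R : rel V) (a : V) (Q : V -> Prop) :
  Q a -> (forall z1 z2, connect R a z1 -> Q z1 -> R z1 z2 -> Q z2) ->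
  forall b, connect R a b -> Q b.
Proof.
move=> Qa HQ b /connectP[s Hs ->].
elim/last_ind: s Hs => [//|s z IH]; rewrite rcons_path last_rcons => /andP[Hs Hz].
apply: (HQ (last a s)) => //; last exact: IH.
by apply/connectP; exists s.
Qed.

Lemma below_refl p a : below p a a. Proof. exact: connect0. Qed.

Lemma below_trans p a b c : below p a b -> below p b c -> below p a c.
Proof. exact: connect_trans. Qed.

Lemma below_step p a b : p a = Some b -> below p a b.
Proof. by move=> H; apply: connect1; rewrite /parent_rel /= H. Qed.

Lemma below_cases p a b : below p a b -> a = b \/ exists w, p a = Some w /\ below p w b.
Proof.
move=> /connectP[[|w s]] /=; first by move=> _ ->; left.
move=> /andP[/eqP Hw Hs] ->; right; exists w; split=> //.
by apply/connectP; exists s.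
Qed.

Lemma below_ind p b (Q : V -> Prop) :
  Q b -> (forall a w, p a = Some w -> below p w b -> Q w -> Q a) ->
  forall a, below p a b -> Q a.
Proof.
move=> Qb HQ a /connectP[s Hs Hl].
elim: s a Hs Hl => [|w s IH] a /=; first by move=> _ <-.
move=> /andP[/eqP Hw Hs] Hl; apply: (HQ a w Hw); last exact: IH.
by apply/connectP; exists s.
Qed.

Lemma below_root p a b : p a = None -> below p a b -> b = a.
Proof. by move=> Ha /below_cases[//|[w [Hw _]]]; rewrite Ha in Hw. Qed.

Lemma below_total p z a b : below p z a -> below p z b -> below p a b || below p b a.
Proof.
move=> Hza; elim/below_ind: z / Hza => [->//|c w Hcw Hwa IH Hcb].
case: (below_cases Hcb) => [<-|[w' [Hw' Hw'b]]].
  by rewrite orbC (below_trans (below_step Hcw) Hwa).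
by apply: IH; rewrite Hcw in Hw'; case: Hw' => ->.
Qed.

(* Acyclicity, witnessed by a rank strictly increasing towards the root. *)
Definition ranked (p : V -> option V) : Prop :=
  exists h : V -> nat, forall a b, p a = Some b -> h a < h b.

Lemma below_rank p (h : V -> nat) : (forall a b, p a = Some b -> h a < h b) ->
  forall a b, below p a b -> a = b \/ h a < h b.
Proof.
move=> Hh a b Hab; elim/below_ind: a / Hab => [|a w Haw _ [Ew|IH]]; first by left.
  by right; rewrite -Ew; exact: Hh.
by right; exact: ltn_trans (Hh _ _ Haw) IH.
Qed.

Lemma below_antisym p : ranked p -> forall a b, below p a b -> below p b a -> a = b.
Proof.
move=> [h Hh] a b Hab Hba.
case: (below_rank Hh Hab) => // H1; case: (below_rank Hh Hba) => [H2|H2]; first by [].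
by have := ltn_trans H1 H2; rewrite ltnn.
Qed.

(* If no parent lies below its child, the number of non-ancestors is a rank. *)
Lemma acyclic_ranked p : (forall a b, p a = Some b -> ~~ below p b a) -> ranked p.
Proof.
move=> Hac; exists (fun a => #|[set z | ~~ below p a z]|) => a b Hab.
apply: proper_card; apply/properP; split.
  apply/subsetP=> z; rewrite !inE; apply: contra => Hbz.
  exact: below_trans (below_step Hab) Hbz.
exists a; last by rewrite !inE below_refl.
by rewrite inE; exact: Hac.
Qed.

End AncestorOrder.

Section Components.
Variables (V : finType) (e : rel V) (esym : symmetric e).

Definition connected (S : {set V}) : Prop :=
  forall a b, a \in S -> b \in S -> connect (restr e S) a b.

Lemma restr_csym (S : {set V}) : connect_sym (restr e S).
Proof.
by apply: sym_connect_sym => a b; rewrite /restr /= esym; case: (a \in S); case: (b \in S).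
Qed.

Lemma in_comp (S : {set V}) x y : (y \in Defs.comp e S x) = (y \in S) && connect (restr e S) x y.
Proof. by rewrite inE. Qed.

Lemma comp_same (S : {set V}) x u : u \in Defs.comp e S x -> Defs.comp e S u = Defs.comp e S x.
Proof.
rewrite in_comp => /andP[_ Hxu]; apply/setP=> z; rewrite !in_comp.
congr (_ && _); apply/idP/idP => H; first exact: connect_trans Hxu H.
by apply: connect_trans H; rewrite restr_csym.
Qed.

Lemma comp_edge (S : {set V}) x a b :
  a \in Defs.comp e S x -> b \in S -> e a b -> b \in Defs.comp e S x.
Proof.
rewrite !in_comp => /andP[Ha Hxa] Hb Hab; rewrite Hb /=.
by apply: connect_trans Hxa (connect1 _); rewrite /restr /= Ha Hb Hab.
Qed.

Lemma comp_conn (S : {set V}) x : connected (Defs.comp e S x).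
Proof.
set C := Defs.comp e S x.
have Hx : forall z, connect (restr e S) x z -> z \in S -> connect (restr e C) x z.
  apply: (connect_ind (Q := fun z => z \in S -> connect (restr e C) x z)).
    by move=> _; exact: connect0.
  move=> z1 z2 Hxz1 IH /and3P[Hz1 Hz2 He12] _.
  have Hxz2 : connect (restr e S) x z2.
    by apply: connect_trans Hxz1 (connect1 _); rewrite /restr /= Hz1 Hz2.
  apply: connect_trans (IH Hz1) (connect1 _).
  by rewrite /restr /= !in_comp Hz1 Hz2 Hxz1 Hxz2 He12.
move=> a b; rewrite !in_comp => /andP[Ha Hxa] /andP[Hb Hxb].
by apply: connect_trans (Hx _ Hxb Hb); rewrite restr_csym; exact: Hx.
Qed.

End Components.

Section ValidSearchTrees.
Variables (V : finType) (e : rel V) (esym : symmetric e).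

Fixpoint par_children (r : V) (ts : seq (rtree V)) (u : V) : option V :=
  match ts with
  | [::] => None
  | t' :: ts' => if rlabel t' == u then Some r
                 else match par_in t' u with Some x => Some x | None => par_children r ts' u end
  end.

Lemma par_inE r ts u : par_in (RNode r ts) u = par_children r ts u.
Proof. by elim: ts => [//|t' ts IH] /=; rewrite -IH. Qed.

Lemma par_children_none r ts u :
  (forall t', List.In t' ts -> rlabel t' != u /\ par_in t' u = None) ->
  par_children r ts u = None.
Proof.
elim: ts => [//|t' ts IH] H /=.
have [/negbTE -> ->] := H t' (or_introl erefl).
by apply: IH => t'' Ht''; apply: H; right.
Qed.

Lemma par_children_in r ts tk u : List.In tk ts ->
  (forall t', List.In t' ts -> u \in nodes t' -> t' = tk) ->
  (forall t', List.In t' ts -> u \notin nodes t' -> rlabel t' != u /\ par_in t' u = None) ->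
  u \in nodes tk ->
  par_children r ts u = if rlabel tk == u then Some r else par_in tk u.
Proof.
elim: ts => [//|t' ts IH] Hin Huniq Hout Hu /=.
case Ht': (u \in nodes t').
  have Et := Huniq t' (or_introl erefl) Ht'; subst t'.
  case: ifP => // Hl; case Hp: (par_in tk u) => [x|] //.
  apply: par_children_none => t'' Ht''; case Hu'': (u \in nodes t'').
    by rewrite (Huniq t'' (or_intror Ht'') Hu'') Hl Hp.
  by apply: Hout; [right | rewrite Hu''].
have [/negbTE -> ->] := Hout t' (or_introl erefl) (negbT Ht').
apply: IH => //.
- by case: Hin => // Et; subst t'; rewrite Hu in Ht'.
- by move=> t'' H; apply: Huniq; right.
- by move=> t'' H; apply: Hout; right.
Qed.

Lemma in_map_nodes (ts : seq (rtree V)) t' : List.In t' ts -> nodes t' \in map (@nodes V) ts.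
Proof. by elim: ts => [//|t ts IH] /= [->|/IH H]; rewrite in_cons ?eqxx ?H ?orbT. Qed.

Lemma map_nodes_in (ts : seq (rtree V)) X : X \in map (@nodes V) ts ->
  exists t', List.In t' ts /\ nodes t' = X.
Proof.
elim: ts => [//|t ts IH] /=; rewrite in_cons => /orP[/eqP ->|/IH [t' [H1 H2]]].
  by exists t; split=> //; left.
by exists t'; split=> //; right.
Qed.

Lemma uniq_nodes_in (ts : seq (rtree V)) t1 t2 : uniq (map (@nodes V) ts) ->
  List.In t1 ts -> List.In t2 ts -> nodes t1 = nodes t2 -> t1 = t2.
Proof.
elim: ts => [//|t ts IH] /= /andP[Hn Hu] [E1|H1] [E2|H2] Eq; subst.
- by [].
- by move: Hn; rewrite Eq (in_map_nodes H2).
- by move: Hn; rewrite -Eq (in_map_nodes H1).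
- exact: IH.
Qed.

Record st_shape (S : {set V}) (t : rtree V) : Prop := {
  st_root_in : rlabel t \in S;
  st_parent_in : forall u w, par_in t u = Some w -> u \in S /\ w \in S;
  st_root_parent : par_in t (rlabel t) = None;
  st_below_root : forall a, a \in S -> below (par_in t) a (rlabel t);
  st_acyclic : forall a b, par_in t a = Some b -> ~~ below (par_in t) b a;
  st_edge : forall a b, a \in S -> b \in S -> e a b ->
    below (par_in t) a b || below (par_in t) b a;
  st_desc_connected : forall y, y \in S -> y != rlabel t -> connected e (desc (par_in t) y) }.

Section Node.
Variables (S : {set V}) (r : V) (ts : seq (rtree V)).
Hypothesis Hr : r \in S.
Hypothesis Hu : uniq (map (@nodes V) ts).
Hypothesis Hc : [set:: map (@nodes V) ts] = components e (S :\ r).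
Hypothesis IH : forall t', List.In t' ts -> st_shape (nodes t') t'.
Let F := par_in (RNode r ts).

Lemma child_component t' : List.In t' ts ->
  exists2 x, x \in S :\ r & nodes t' = Defs.comp e (S :\ r) x.
Proof.
move=> H; have : nodes t' \in components e (S :\ r) by rewrite -Hc inE; exact: in_map_nodes.
by move/imsetP.
Qed.

Lemma child_cover u : u \in S :\ r -> exists t', List.In t' ts /\ u \in nodes t'.
Proof.
move=> Hu'; have : Defs.comp e (S :\ r) u \in [set:: map (@nodes V) ts].
  by rewrite Hc; apply: imset_f.
rewrite inE => /map_nodes_in [t' [Ht' Et']]; exists t'; split=> //.
by rewrite Et' in_comp Hu' connect0.
Qed.

Lemma child_sub t' u : List.In t' ts -> u \in nodes t' -> u \in S :\ r.
Proof. by case/child_component => x _ ->; rewrite in_comp => /andP[]. Qed.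

Lemma child_unique t1 t2 u :
  List.In t1 ts -> List.In t2 ts -> u \in nodes t1 -> u \in nodes t2 -> t1 = t2.
Proof.
move=> H1 H2 Hu1 Hu2; apply: (uniq_nodes_in Hu H1 H2).
case: (child_component H1) => x1 _ E1; case: (child_component H2) => x2 _ E2.
rewrite E1 E2 -(comp_same esym (_ : u \in Defs.comp e (S :\ r) x1)) -?E1 //.
by rewrite (comp_same esym (_ : u \in Defs.comp e (S :\ r) x2)) -?E2.
Qed.

Lemma child_edge t' a b : List.In t' ts -> a \in nodes t' -> b \in S :\ r -> e a b ->
  b \in nodes t'.
Proof. by case/child_component => x _ ->; apply: comp_edge. Qed.

Lemma child_connected t' : List.In t' ts -> connected e (nodes t').
Proof. by case/child_component => x _ ->; apply: comp_conn. Qed.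

Lemma child_root_in t' : List.In t' ts -> rlabel t' \in nodes t'.
Proof. by move/IH => []. Qed.

Lemma node_par_child tk u : List.In tk ts -> u \in nodes tk ->
  F u = if rlabel tk == u then Some r else par_in tk u.
Proof.
move=> Hk Huk; rewrite /F par_inE; apply: par_children_in => //.
  by move=> t' Ht' Hu'; apply: child_unique Ht' Hk Hu' Huk.
move=> t' Ht' Hnu; split; first by apply: contraNneq Hnu => <-; exact: child_root_in.
case Hp: (par_in t' u) => [w|] //.
by have [Hu1 _] := st_parent_in (IH Ht') Hp; rewrite Hu1 in Hnu.
Qed.

Lemma node_par_out u : u \notin S :\ r -> F u = None.
Proof.
move=> Hnu; rewrite /F par_inE; apply: par_children_none => t' Ht'; split.
  by apply: contraNneq Hnu => <-; apply: (child_sub Ht'); exact: child_root_in.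
case Hp: (par_in t' u) => [w|] //.
by have [Hu1 _] := st_parent_in (IH Ht') Hp; rewrite (child_sub Ht' Hu1) in Hnu.
Qed.

Lemma node_par_root : F r = None.
Proof. by apply: node_par_out; rewrite !inE eqxx. Qed.

Lemma below_lift tk a b : List.In tk ts -> a \in nodes tk ->
  below (par_in tk) a b -> below F a b.
Proof.
move=> Hk Ha Hab; elim/below_ind: a / Hab Ha => [|a w Haw Hwb IHw] Ha; first exact: below_refl.
have Hla : rlabel tk != a by apply/eqP=> E; move: Haw; rewrite -E (st_root_parent (IH Hk)).
have [_ Hw] := st_parent_in (IH Hk) Haw.
apply: below_trans (below_step (_ : F a = Some w)) (IHw Hw).
by rewrite (node_par_child Hk Ha) (negbTE Hla).
Qed.

Lemma below_drop tk a b : List.In tk ts -> a \in nodes tk ->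
  below F a b -> below (par_in tk) a b \/ b = r.
Proof.
move=> Hk Ha Hab; elim/below_ind: a / Hab Ha => [|a w Haw Hwb IHw] Ha.
  by left; exact: below_refl.
move: Haw; rewrite (node_par_child Hk Ha); case: ifP => Hla.
  by case=> Ew; subst w; right; exact: (below_root node_par_root Hwb).
move=> Haw; have [_ Hw] := st_parent_in (IH Hk) Haw.
case: (IHw Hw) => [H|->]; last by right.
by left; exact: below_trans (below_step Haw) H.
Qed.

Lemma child_below_closed tk z y : List.In tk ts -> z \in nodes tk ->
  below (par_in tk) z y -> y \in nodes tk.
Proof.
move=> Hk Hz Hzy; elim/below_ind: z / Hzy Hz => [//|a w Haw _ IHw] _.
by apply: IHw; have [_ Hw] := st_parent_in (IH Hk) Haw.
Qed.

Lemma node_below_root a : a \in S -> below F a r.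
Proof.
move=> Ha; case: (eqVneq a r) => [->|Har]; first exact: below_refl.
have [tk [Hk Hak]] : exists tk, List.In tk ts /\ a \in nodes tk.
  by apply: child_cover; rewrite !inE Har.
apply: below_trans (below_lift Hk Hak (st_below_root (IH Hk) Hak)) (below_step _).
by rewrite (node_par_child Hk (child_root_in Hk)) eqxx.
Qed.

Lemma node_acyclic a b : F a = Some b -> ~~ below F b a.
Proof.
case Har: (a \in S :\ r); last by rewrite node_par_out ?Har.
have [tk [Hk Hak]] := child_cover Har; rewrite (node_par_child Hk Hak); case: ifP => Hla.
  case=> Eb; subst b; apply/negP=> /(below_root node_par_root) Ear.
  by rewrite Ear !inE eqxx in Har.
move=> Hab; have [_ Hb] := st_parent_in (IH Hk) Hab; apply/negP => Hba.
case: (below_drop Hk Hb Hba) => [H|Ea]; first by move/negP: (st_acyclic (IH Hk) Hab).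
by rewrite Ea !inE eqxx in Har.
Qed.

Lemma node_edge a b : a \in S -> b \in S -> e a b -> below F a b || below F b a.
Proof.
move=> Ha Hb Hab.
case: (eqVneq a r) => [->|Har]; first by rewrite node_below_root ?orbT.
case: (eqVneq b r) => [->|Hbr]; first by rewrite node_below_root.
have [tk [Hk Hak]] : exists tk, List.In tk ts /\ a \in nodes tk.
  by apply: child_cover; rewrite !inE Har.
have Hbk : b \in nodes tk by apply: child_edge Hk Hak _ Hab; rewrite !inE Hbr.
by case/orP: (st_edge (IH Hk) Hak Hbk Hab) => H; apply/orP; [left|right];
  apply: below_lift H.
Qed.

Lemma node_desc tk y : List.In tk ts -> y \in nodes tk ->
  desc F y = [set z in nodes tk | below (par_in tk) z y].
Proof.
move=> Hk Hyk; have Hyr : y != r by apply: contraTneq (child_sub Hk Hyk) => ->; rewrite !inE eqxx.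
apply/setP => z; rewrite in_desc inE; apply/idP/idP; last by move=> /andP[Hz]; apply: below_lift.
move=> Hzy; case Hzr: (z \in S :\ r); last first.
  by move: Hzy => /(below_root (node_par_out (negbT Hzr))) Ey; rewrite -Ey (child_sub Hk Hyk) in Hzr.
have [tj [Hj Hzj]] := child_cover Hzr.
case: (below_drop Hj Hzj Hzy) => [H|Ey]; last by rewrite Ey eqxx in Hyr.
by have Ejk := child_unique Hj Hk (child_below_closed Hj Hzj H) Hyk; subst tj; rewrite Hzj H.
Qed.

Lemma node_desc_connected y : y \in S -> y != r -> connected e (desc F y).
Proof.
move=> Hy Hyr; have [tk [Hk Hyk]] : exists tk, List.In tk ts /\ y \in nodes tk.
  by apply: child_cover; rewrite !inE Hyr.
rewrite (node_desc Hk Hyk); case: (eqVneq y (rlabel tk)) => [Ey|Hyl].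
  have -> : [set z in nodes tk | below (par_in tk) z y] = nodes tk.
    apply/setP=> z; rewrite inE Ey.
    by apply: andb_idr => Hz; exact: (st_below_root (IH Hk) Hz).
  exact: child_connected.
have -> : [set z in nodes tk | below (par_in tk) z y] = desc (par_in tk) y.
  apply/setP=> z; rewrite inE in_desc; apply: andb_idl => H.
  case: (below_cases H) => [->//|[w [Hw _]]].
  by have [] := st_parent_in (IH Hk) Hw.
exact: (st_desc_connected (IH Hk) Hyk Hyl).
Qed.

Lemma node_st_shape : st_shape S (RNode r ts).
Proof.
split=> //.
- move=> u w; case Hur: (u \in S :\ r); last by rewrite -/F node_par_out ?Hur.
  have [tk [Hk Huk]] := child_cover Hur; rewrite -/F (node_par_child Hk Huk).
  have HuS : u \in S by move: Hur; rewrite !inE => /andP[].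
  case: ifP => _; first by case=> <-.
  move=> Hp; have [_ Hw] := st_parent_in (IH Hk) Hp.
  by split=> //; move: (child_sub Hk Hw); rewrite !inE => /andP[].
- exact: node_par_root.
- exact: node_below_root.
- exact: node_acyclic.
- exact: node_edge.
- exact: node_desc_connected.
Qed.

End Node.

Lemma valid_st_shape S t : valid_st e S t -> st_shape S t.
Proof. by elim=> S' r ts Hr Hu Hc _ IH; exact: node_st_shape. Qed.

End ValidSearchTrees.

Section HighestVertex.
Variables (V : finType) (e : rel V).

Definition edge_comparable (p : V -> option V) : Prop :=
  forall a b, e a b -> below p a b || below p b a.

Definition st_inv (p : V -> option V) : Prop := ranked p /\ edge_comparable p.

Definition top (p : V -> option V) (S : {set V}) : option V :=
  [pick a in S | [forall b in S, below p b a]].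

Lemma top_unique p (S : {set V}) t : ranked p -> t \in S ->
  (forall b, b \in S -> below p b t) -> top p S = Some t.
Proof.
move=> Hr Ht Hb; rewrite /top; case: pickP => [t' /andP[Ht' /forall_inP Hall]|].
  by congr Some; apply: (below_antisym Hr); [apply: Hb | apply: Hall].
by move=> /(_ t); rewrite Ht /=; move/negbT/negP; case; apply/forall_inP.
Qed.

(* In a tree satisfying the invariant, a nonempty connected set has a top: a vertex of
   maximal rank is an ancestor of its neighbours in S, hence of all of S. *)
Lemma top_exists p (S : {set V}) a0 : st_inv p -> connected e S -> a0 \in S ->
  exists t, [/\ top p S = Some t, t \in S & forall b, b \in S -> below p b t].
Proof.
move=> [Hr HE] Hc Ha0; have [h Hh] := Hr.
case: (@arg_maxnP V a0 (mem S) h Ha0) => t Ht Hmax.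
suff Hb : forall b, b \in S -> below p b t by exists t; split=> //; apply: top_unique.
move=> b Hb; apply: (connect_ind (Q := fun z => below p z t) _ _ (Hc _ _ Ht Hb)).
  exact: below_refl.
move=> z1 z2 _ H1 /and3P[_ Hz2 Hez].
case/orP: (HE _ _ Hez) => H12; last exact: below_trans H12 H1.
case/orP: (below_total H1 H12) => // Ht2.
case: (below_rank Hh Ht2) => [<-|Hlt]; first exact: below_refl.
by have := Hmax _ Hz2; rewrite /= leqNgt Hlt.
Qed.

End HighestVertex.

Lemma search_tree_props (V : finType) (e : rel V) (HG : is_tree e) p : is_st e p ->
  st_inv e p /\ forall y, connected e (desc p y).
Proof.
case: HG => esym _ _ Gconn _.
case=> t [Hv Hp]; have -> : p = par_in t by apply: functional_extensionality => u; rewrite Hp.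
have Ht := valid_st_shape esym Hv; split; first split.
- by apply: acyclic_ranked => a b; exact: (st_acyclic Ht).
- by move=> a b Hab; apply: (st_edge Ht) => //; rewrite in_setT.
move=> y; case: (eqVneq y (rlabel t)) => [Ey|Hy]; last exact: (st_desc_connected Ht) (in_setT y) Hy.
have -> : desc (par_in t) y = setT.
  by apply/setP => z; rewrite in_desc in_setT Ey (st_below_root Ht) // in_setT.
move=> a b _ _; rewrite (@eq_connect _ _ e); first exact: Gconn.
by move=> u w; rewrite /restr /= !in_setT.
Qed.

Section Rotation.
Variables (V : finType) (e : rel V) (esym : symmetric e).
Variables (p : V -> option V) (v q : V) (Hvq : p v = Some q).
Variables (h : V -> nat) (Hh : forall a b, p a = Some b -> h a < h b).

Let p' := rotate e p v.

Definition moved (w : V) : bool := (p w == Some v) && [exists y in desc p w, e y q].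
Definition stays (u : V) : bool := (p u == Some v) && ~~ [exists y in desc p u, e y q].

Lemma rank_vq : h v < h q. Proof. exact: Hh. Qed.

Lemma q_neq_v : (q == v) = false.
Proof. by apply/eqP=> E; have := rank_vq; rewrite E ltnn. Qed.

Lemma rot_v : p' v = p q.
Proof. by rewrite /p' /rotate Hvq eqxx. Qed.

Lemma rot_q : p' q = Some v.
Proof. by rewrite /p' /rotate Hvq q_neq_v eqxx. Qed.

Lemma rot_moved a : a != v -> a != q -> moved a -> p' a = Some q.
Proof. by move=> /negbTE Hav /negbTE Haq Hm; rewrite /p' /rotate Hvq Hav Haq -/(moved a) Hm. Qed.

Lemma rot_other a : a != v -> a != q -> ~~ moved a -> p' a = p a.
Proof.
by move=> /negbTE Hav /negbTE Haq /negbTE Hm; rewrite /p' /rotate Hvq Hav Haq -/(moved a) Hm.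
Qed.

(* The rotated tree is acyclic: v takes q's rank, everything else keeps its rank. *)
Lemma rot_ranked : ranked p'.
Proof.
exists (fun z => if z == v then (h q).*2.+1 else (h z).*2) => a b.
case: (eqVneq a v) => [->|Hav].
  rewrite rot_v => Hqb; have Hb := Hh Hqb.
  have -> : (b == v) = false.
    by apply/eqP=> E; move: Hb; rewrite E => /(ltn_trans rank_vq); rewrite ltnn.
  by rewrite -doubleS leq_double.
case: (eqVneq a q) => [->|Haq]; first by rewrite rot_q; case=> <-; rewrite eqxx.
case Hm: (moved a).
  rewrite rot_moved ?Hm //; case=> <-; rewrite q_neq_v; move/andP: Hm => [/eqP Hav' _].
  by rewrite ltn_double; exact: ltn_trans (Hh Hav') rank_vq.
rewrite rot_other ?Hm // => Hab; case: (eqVneq b v) => [Eb|Hbv].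
  rewrite Eb in Hab; rewrite ltnS leq_double; apply: ltnW.
  exact: ltn_trans (Hh Hab) rank_vq.
by rewrite ltn_double; apply: Hh.
Qed.

Lemma rot_below_keep z t : below p z t -> t != q -> below p' z t.
Proof.
move=> Hzt Htq; elim/below_ind: z / Hzt => [|a w Haw Hwt IH]; first exact: below_refl.
case: (eqVneq a v) => [Eav|Hav].
  subst a; rewrite Hvq in Haw; case: Haw => Ew; subst w.
  case: (below_cases IH) => [Eq|[w' [Hw' Hw't]]]; first by rewrite Eq eqxx in Htq.
  by move: Hw'; rewrite rot_q; case=> ->.
case: (eqVneq a q) => [Eaq|Haq].
  subst a; apply: below_trans (below_step rot_q) (below_trans (below_step _) IH).
  by rewrite rot_v.
case Hm: (moved a).
  have Ew : w = v by move/andP: Hm => [/eqP]; rewrite Haw; case.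
  subst w; apply: below_trans (below_step (rot_moved Hav Haq Hm)) _.
  exact: below_trans (below_step rot_q) IH.
by apply: below_trans (below_step _) IH; rewrite rot_other ?Hm.
Qed.

Lemma rot_below_q z : below p z q -> below p' z v.
Proof.
move=> Hzq; elim/below_ind: z / Hzq => [|a w Haw Hwq IH]; first exact: below_step rot_q.
case: (eqVneq a v) => [->|Hav]; first exact: below_refl.
case: (eqVneq a q) => [->|Haq]; first exact: below_step rot_q.
case Hm: (moved a).
  exact: below_trans (below_step (rot_moved Hav Haq Hm)) (below_step rot_q).
by apply: below_trans (below_step _) IH; rewrite rot_other ?Hm.
Qed.

Lemma rot_below_q_stay z : below p z q -> z != v ->
  (forall u, stays u -> ~~ below p z u) -> below p' z q.
Proof.
move=> Hzq; elim/below_ind: z / Hzq => [|a w Haw Hwq IH] Hav Hst; first exact: below_refl.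
case: (eqVneq a q) => [->|Haq]; first exact: below_refl.
case Hm: (moved a); first exact: below_step (rot_moved Hav Haq Hm).
have Hwv : w != v.
  apply/eqP=> Ew; subst w; have := Hst a; rewrite below_refl /stays Haw eqxx /=.
  by move: Hm; rewrite /moved Haw eqxx /= => -> /(_ isT).
apply: below_trans (below_step _) (IH Hwv _); first by rewrite rot_other ?Hm.
move=> u Hu; apply: contra (Hst u Hu) => Hwu.
exact: below_trans (below_step Haw) Hwu.
Qed.

Lemma rot_below_outside a b : ~~ below p a q -> below p' a b -> below p a b.
Proof.
move=> Haq Hab; elim/below_ind: a / Hab Haq => [|a w Haw Hwb IH] Haq; first exact: below_refl.
have Hav : a != v by apply: contra Haq => /eqP ->; exact: below_step.
have Haq' : a != q by apply: contra Haq => /eqP ->; exact: below_refl.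
have Hm : ~~ moved a.
  apply: contra Haq => /andP[/eqP Hpa _].
  exact: below_trans (below_step Hpa) (below_step Hvq).
move: Haw; rewrite rot_other // => Haw.
apply: below_trans (below_step Haw) (IH _); apply: contra Haq.
exact: below_trans (below_step Haw).
Qed.

Lemma rot_below_v b : below p' v b -> below p v b.
Proof.
case/below_cases=> [<-|[w [Hw Hwb]]]; first exact: below_refl.
move: Hw; rewrite rot_v => Hqw.
have Hwq : ~~ below p w q.
  apply/negP=> Hwq; case: (below_rank Hh Hwq) => [E|Hlt].
    by have := Hh Hqw; rewrite E ltnn.
  by have := ltn_trans (Hh Hqw) Hlt; rewrite ltnn.
exact: below_trans (below_step Hvq) (below_trans (below_step Hqw) (rot_below_outside Hwq Hwb)).
Qed.

Lemma rot_edge_side a b : e a b -> below p a b -> below p' a b || below p' b a.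
Proof.
move=> Hab Hle; case: (eqVneq b q) => [Eb|Hbq]; last by rewrite rot_below_keep.
subst b; case: (eqVneq a v) => [->|Hav]; first by rewrite orbC (below_step rot_q).
rewrite rot_below_q_stay //= => u /andP[/eqP Hu Hne]; apply/negP=> Hau.
by move/existsP: Hne; apply; exists a; rewrite in_desc Hau.
Qed.

Lemma rot_inv : st_inv e p -> st_inv e p'.
Proof.
move=> [_ HE]; split; first exact: rot_ranked.
move=> a b Hab; case/orP: (HE _ _ Hab) => H; first exact: rot_edge_side.
by rewrite orbC; apply: rot_edge_side => //; rewrite esym.
Qed.

(* If q is the top of a connected S not containing v, S avoids the staying subtrees:
   a path in S from q into such a subtree would have to enter it through v. *)
Lemma stays_outside (S : {set V}) u b : edge_comparable e p -> connected e S ->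
  q \in S -> v \notin S -> (forall b, b \in S -> below p b q) ->
  stays u -> b \in S -> ~~ below p b u.
Proof.
move=> HE Hc Hq HvS Hall /andP[/eqP Hu Hne] Hb.
apply: (connect_ind (Q := fun z => ~~ below p z u)) (Hc _ _ Hq Hb).
  apply/negP=> Hqu; have Huv := Hh Hu.
  case: (below_rank Hh Hqu) => [E|Hlt]; first by rewrite -E in Huv; have := ltn_trans Huv rank_vq; rewrite ltnn.
  by have := ltn_trans Hlt (ltn_trans Huv rank_vq); rewrite ltnn.
move=> z1 z2 _ H1 /and3P[Hz1 Hz2 Hez]; apply/negP=> H2.
case/orP: (HE _ _ Hez) => H12; first by move/negP: H1; apply; exact: below_trans H12 H2.
case/orP: (below_total H12 H2) => Hz1u; first by move/negP: H1.
case: (below_cases Hz1u) => [Euz|[w [Hw Hwz]]]; first by subst z1; rewrite below_refl in H1.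
rewrite Hu in Hw; case: Hw => Ew; subst w.
case: (below_cases Hwz) => [Evz|[w [Hw Hwz']]]; first by subst z1; rewrite Hz1 in HvS.
rewrite Hvq in Hw; case: Hw => Ew; subst w.
have Eq : z1 = q by apply: (below_antisym (ex_intro _ h Hh)) => //; apply: Hall.
subst z1; move/existsP: Hne; apply; exists z2; rewrite in_desc H2 /=.
by rewrite esym.
Qed.

Lemma rot_top (S : {set V}) t : edge_comparable e p -> connected e S ->
  t \in S -> (forall b, b \in S -> below p b t) ->
  top p' S = if (t == q) && (v \in S) then Some v else Some t.
Proof.
move=> HE Hc Ht Hall; have Hr' := rot_ranked.
case: (eqVneq t q) => [Etq|Htq] /=; last first.
  by apply: top_unique => // b Hb; apply: rot_below_keep => //; apply: Hall.
subst t; case: ifP => HvS.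
  by apply: top_unique => // b Hb; apply: rot_below_q; apply: Hall.
apply: top_unique => // b Hb; apply: rot_below_q_stay; first exact: Hall.
  by apply: contraTneq Hb => ->; rewrite HvS.
by move=> u Hu; apply: stays_outside Hu Hb => //; rewrite HvS.
Qed.

End Rotation.

Lemma sum_indicator_le1 (T : finType) (f : pred T) :
  (forall a b, f a -> f b -> a = b) -> \sum_(y : T) nat_of_bool (f y) <= 1.
Proof.
move=> Hu; rewrite (eq_bigr (fun y => if f y then 1 else 0)); last by move=> y _; case: (f y).
rewrite -big_mkcond sum1_card; apply/card_le1_eqP => a b Ha Hb; apply: Hu; [exact: Hb|exact: Ha].
Qed.

Lemma neq_tri (T : eqType) (a b c : T) : (a != c) <= (a != b) + (b != c).
Proof. by case: (eqVneq a b) => [->|]; case: (a != c); rewrite ?add0n ?leq_b1 // addnC. Qed.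

Section Potential.
Variables (V : finType) (e : rel V) (esym : symmetric e).
Variables (P : V -> option V) (d : V -> V).
Hypothesis HPr : ranked P.
Hypothesis HPc : forall y, connected e (desc P y).

Definition Psub (y : V) : {set V} := desc P y.

Definition part (y z : V) : option V :=
  if z == y then Some (d y) else child_toward P y z.

Definition top_part (p : V -> option V) (y : V) : option V :=
  if top p (Psub y) is Some t then part y t else None.

Lemma Psub_self y : y \in Psub y.
Proof. by rewrite in_desc below_refl. Qed.

Lemma Psub_laminar z y1 y2 : z \in Psub y1 -> z \in Psub y2 -> below P y1 y2 || below P y2 y1.
Proof. rewrite !in_desc; exact: below_total. Qed.

Lemma top_partE p y t : top p (Psub y) = Some t -> top_part p y = part y t.
Proof. by rewrite /top_part => ->. Qed.

Lemma part_sub y1 y2 z : below P y2 y1 -> y2 != y1 -> below P z y2 -> part y1 z = part y1 y2.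
Proof.
move=> H21 Hne Hz2.
have Hz1 : z != y1.
  apply: contraNneq Hne => Ez; subst z; apply/eqP; exact: (below_antisym HPr H21 Hz2).
rewrite /part (negbTE Hz1) (negbTE Hne) /child_toward; apply: eq_pick => c /=.
case: (eqVneq (P c) (Some y1)) => //= Hc; rewrite !in_desc.
apply/idP/idP => [Hzc|Hyc]; last exact: below_trans Hz2 Hyc.
case/orP: (below_total Hz2 Hzc) => // Hcy2.
case: (below_cases Hcy2) => [->|[w [Hw Hwy]]]; first exact: below_refl.
rewrite Hc in Hw; case: Hw => Ew; subst w.
by rewrite (below_antisym HPr Hwy H21) eqxx in Hne.
Qed.

(* u is a fresh top for y in p: u is the highest vertex of its part of P(y), and that
   part is not the top part.  Moving the pointer to such a u is charged 2 to y. *)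
Definition fresh_top (p : V -> option V) (u y : V) : bool :=
  [&& u \in Psub y,
      [forall b in Psub y, (part y b == part y u) ==> below p u b ==> (b == u)] &
      top_part p y != part y u].

Lemma fresh_top_nested p u y1 y2 : st_inv e p -> below P y2 y1 -> y2 != y1 ->
  fresh_top p u y1 -> fresh_top p u y2 -> False.
Proof.
move=> HI H21 Hne /and3P[Hu1 /forall_inP Hall1 _] /and3P[Hu2 _ Htau2].
have [t2 [Ht2 Ht2S Hb2]] := top_exists HI (@HPc y2) (@Psub_self y2).
have Hut := Hb2 _ Hu2.
have Ht21 : t2 \in Psub y1 by move: Ht2S; rewrite !in_desc => /below_trans; apply.
have Hp : part y1 t2 = part y1 u.
  by rewrite /Psub !in_desc in Ht2S Hu2; rewrite (part_sub H21 Hne Ht2S) (part_sub H21 Hne Hu2).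
have := Hall1 _ Ht21; rewrite Hp eqxx Hut /= => /eqP Et; subst t2.
by rewrite (top_partE Ht2) eqxx in Htau2.
Qed.

Lemma fresh_top_unique p u y1 y2 : st_inv e p -> fresh_top p u y1 -> fresh_top p u y2 -> y1 = y2.
Proof.
move=> HI H1 H2; have Hu1 : u \in Psub y1 by case/and3P: H1.
have Hu2 : u \in Psub y2 by case/and3P: H2.
case: (eqVneq y2 y1) => [//|Hne].
case/orP: (Psub_laminar Hu1 Hu2) => H; last by case: (fresh_top_nested HI H Hne H1 H2).
by case: (fresh_top_nested HI H _ H2 H1); rewrite eq_sym.
Qed.

Lemma rot_change p v q y : st_inv e p -> p v = Some q ->
  top_part (rotate e p v) y != top_part p y ->
  [/\ q \in Psub y, v \in Psub y & part y v != part y q].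
Proof.
move=> HI Hvq Hch; have [Hr HE] := HI; have [h Hh] := Hr.
have [t [Ht HtS Hb]] := top_exists HI (@HPc y) (@Psub_self y).
have := rot_top esym Hvq Hh HE (@HPc y) HtS Hb.
case: (eqVneq t q) => [Etq|Htq] /=; last by move=> Ht'; rewrite /top_part Ht' Ht eqxx in Hch.
subst t; case: ifP => HvS Ht'; last by rewrite /top_part Ht' Ht eqxx in Hch.
by split=> //; move: Hch; rewrite /top_part Ht' Ht.
Qed.

Lemma rot_changes_nested p v q y1 y2 : st_inv e p -> p v = Some q ->
  below P y2 y1 -> y2 != y1 ->
  top_part (rotate e p v) y1 != top_part p y1 ->
  top_part (rotate e p v) y2 != top_part p y2 -> False.
Proof.
move=> HI Hvq H21 Hne Ch1 Ch2.
have [_ _ Hp1] := rot_change HI Hvq Ch1.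
have [Hq2 Hv2 _] := rot_change HI Hvq Ch2.
rewrite /Psub !in_desc in Hq2 Hv2.
by rewrite (part_sub H21 Hne Hq2) (part_sub H21 Hne Hv2) eqxx in Hp1.
Qed.

Lemma rot_changes_one p v q y1 y2 : st_inv e p -> p v = Some q ->
  top_part (rotate e p v) y1 != top_part p y1 ->
  top_part (rotate e p v) y2 != top_part p y2 -> y1 = y2.
Proof.
move=> HI Hvq Ch1 Ch2.
have [Hq1 _ _] := rot_change HI Hvq Ch1.
have [Hq2 _ _] := rot_change HI Hvq Ch2.
case: (eqVneq y2 y1) => [//|Hne].
case/orP: (Psub_laminar Hq1 Hq2) => H; last by case: (rot_changes_nested HI Hvq H Hne Ch1 Ch2).
by case: (rot_changes_nested HI Hvq H _ Ch2 Ch1); rewrite eq_sym.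
Qed.

Definition weight (y : V) (s s' : state V) : nat :=
  (top_part s.1 y != top_part s'.1 y) + 2 * ((s.2 != s'.2) && fresh_top s'.1 s'.2 y).

Lemma step_inv s s' : step e s s' -> st_inv e s.1 -> st_inv e s'.1.
Proof.
case: s s' / => //= p x q Hxq [Hr HE]; have [h Hh] := Hr.
exact: (rot_inv esym Hxq Hh).
Qed.

Lemma step_weight s s' : step e s s' -> st_inv e s.1 -> \sum_y weight y s s' <= 2.
Proof.
have fresh_le1 (b : bool) p x : st_inv e p -> \sum_y nat_of_bool (b && fresh_top p x y) <= 1.
  move=> HI; apply: sum_indicator_le1 => a c /andP[_ Ha] /andP[_ Hc].
  exact: fresh_top_unique HI Ha Hc.
rewrite /weight; case: s s' / => /= [p x u Hu|p x q Hq|p x q Hq] HI; rewrite big_split /=;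
  last first.
  rewrite [X in _ + X](eq_bigr (fun _ => 0)); last by move=> y _; rewrite eqxx.
  rewrite big1_eq addn0; apply: leq_trans (_ : 1 <= 2) => //.
  apply: sum_indicator_le1 => a b Ha Hb; rewrite eq_sym in Ha; rewrite eq_sym in Hb.
  exact: rot_changes_one HI Hq Ha Hb.
all: rewrite (eq_bigr (fun _ => 0)); last by move=> y _; rewrite eqxx.
all: rewrite big1_eq add0n -big_distrr /= -[X in _ <= X]muln1 leq_mul2l /=.
all: exact: fresh_le1.
Qed.

Fixpoint wsum (y : V) (s0 : state V) (ss : seq (state V)) : nat :=
  match ss with [::] => 0 | s :: ss' => weight y s0 s + wsum y s ss' end.

Lemma chain_inv s0 ss : chain e s0 ss -> st_inv e s0.1 -> st_inv e (last s0 ss).1.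
Proof.
elim: ss s0 => [//|s ss IH] s0 /= [Hst Hch] HI.
exact: IH Hch (step_inv Hst HI).
Qed.

Lemma wsum_total s0 ss : chain e s0 ss -> st_inv e s0.1 -> \sum_y wsum y s0 ss <= 2 * size ss.
Proof.
elim: ss s0 => [|s ss IH] s0 /=; first by rewrite big1_eq.
move=> [Hst Hch] HI; rewrite big_split /= mulnS.
by apply: leq_add; [exact: step_weight Hst HI | exact: IH Hch (step_inv Hst HI)].
Qed.

Lemma top_part_changes y s0 ss : chain e s0 ss ->
  (top_part s0.1 y != top_part (last s0 ss).1 y) <= wsum y s0 ss.
Proof.
elim: ss s0 => [|s ss IH] s0 /=; first by rewrite eqxx.
move=> [_ Hch]; apply: leq_trans (neq_tri _ (top_part s.1 y) _) _.
by apply: leq_add; [rewrite /weight leq_addr | exact: IH].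
Qed.

Definition region (y : V) (i : option V) : {set V} := [set z in Psub y | part y z == i].

Definition outside (A : {set V}) (s : state V) : Prop := forall b, below s.1 s.2 b -> b \notin A.

(* A step whose new pointer is not in A keeps the pointer outside A: the ancestors
   of the new pointer were ancestors of the old one. *)
Lemma outside_step A s s' : step e s s' -> st_inv e s.1 -> outside A s -> s'.2 \notin A ->
  outside A s'.
Proof.
case: s s' / => /= [p x u Hu|p x q Hq|p x q Hq] HI HN Hn b /=.
- case/below_cases=> [<-//|[w [Hw Hwb]]]; apply: HN => /=.
  by rewrite Hu in Hw; case: Hw => ->.
- by move=> Hqb; apply: HN; exact: below_trans (below_step Hq) Hqb.
move=> Hb; apply: HN => /=; have [[h Hh] _] := HI.
exact: (rot_below_v Hq Hh Hb).
Qed.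

Lemma enter_move A s0 s1 : step e s0 s1 -> outside A s0 -> s1.2 \in A ->
  s1.1 = s0.1 /\ s0.1 s1.2 = Some s0.2.
Proof.
case: s0 s1 / => /= [p x u Hu|p x q Hq|p x q Hq] HN HA //.
  by have := HN q (below_step Hq); rewrite HA.
by have := HN x (below_refl _ _); rewrite HA.
Qed.

(* The child entered is the highest vertex of its part; if that part is not the top
   part, the vertex is a fresh top. *)
Lemma enter_fresh y i p x u : outside (region y i) (p, x) -> p u = Some x ->
  u \in region y i -> top_part p y != i -> fresh_top p u y.
Proof.
move=> HN Hu; rewrite inE => /andP[HuS /eqP Hpu] Ht.
apply/and3P; split=> //; last by rewrite Hpu.
apply/forall_inP=> b HbS; apply/implyP=> /eqP Hpb; apply/implyP=> Hub.
case: (below_cases Hub) => [->//|[w [Hw Hwb]]]; rewrite Hu in Hw; case: Hw => Ew; subst w.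
by have := HN b Hwb; rewrite inE HbS Hpb Hpu eqxx.
Qed.

Lemma enter_part y i ss s0 : st_inv e s0.1 -> outside (region y i) s0 -> chain e s0 ss ->
  has (fun s : state V => s.2 \in region y i) ss ->
  (top_part s0.1 y != i) + (top_part (last s0 ss).1 y != i) <= wsum y s0 ss.
Proof.
elim: ss s0 => [//|s1 ss IH] s0 HI HN /= [Hst Hch] Hhas.
case HA: (s1.2 \in region y i); last first.
  rewrite HA /= in Hhas.
  have IH1 := IH _ (step_inv Hst HI) (outside_step Hst HI HN (negbT HA)) Hch Hhas.
  have Hw : (top_part s0.1 y != top_part s1.1 y) <= weight y s0 s1 by rewrite /weight leq_addr.
  apply: leq_trans (leq_add (neq_tri _ (top_part s1.1 y) _) (leqnn _)) _.
  by rewrite -addnA; exact: leq_add Hw IH1.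
have Htc := top_part_changes y Hch; have [E1 Hpu] := enter_move Hst HN HA.
move: Htc; rewrite E1; clear Hch Hhas IH Hst.
case: s0 s1 HI HN HA Hpu E1 => [p x] [p' u] /= HI HN HA Hpu -> Htc.
case: (eqVneq (top_part p y) i) => [Et|Et].
  by rewrite Et eq_sym in Htc; rewrite add0n; exact: leq_trans Htc (leq_addl _ _).
have Hxu : x != u.
  by apply: contraTneq HA => <-; apply: HN; exact: below_refl.
apply: leq_trans (leq_add (leq_b1 _) (leq_b1 _)) _.
rewrite /weight /= Hxu (enter_fresh HN Hpu HA Et) /= muln1.
exact: leq_trans (leq_addl _ _) (leq_addr _ _).
Qed.

Lemma search_part y x p r ss : st_inv e p -> p r = None -> chain e (p, r) ss ->
  (r = x \/ has (fun s : state V => s.2 == x) ss) -> x \in Psub y ->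
  (top_part p y != part y x) + (top_part (last (p, r) ss).1 y != part y x) <= wsum y (p, r) ss.
Proof.
move=> HI Hr Hch Hvis HxS; set i := part y x.
have HxA : x \in region y i by rewrite inE HxS eqxx.
case HrA: (r \in region y i).
  have [t [Ht HtS Hb]] := top_exists HI (@HPc y) (@Psub_self y).
  move: (HrA); rewrite inE => /andP[HrS /eqP Hpr].
  have Etau : top_part p y = i by rewrite (top_partE Ht) (below_root Hr (Hb _ HrS)).
  have := top_part_changes y Hch; rewrite /= Etau eqxx add0n eq_sym; exact.
have HN : outside (region y i) (p, r) by move=> b /= /(below_root Hr) ->; rewrite HrA.
have Hhas : has (fun s : state V => s.2 \in region y i) ss.
  case: Hvis => [Erx|]; first by rewrite -Erx HrA in HxA.
  by apply: sub_has => s /eqP ->.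
exact: (@enter_part y i ss (p, r) HI HN Hch Hhas).
Qed.

Definition prefh (y : V) (h : seq V) : option V := pref P d h y (size h).

Lemma pref_take X y t : pref P d X y t = prefh y (take t X).
Proof. by rewrite /prefh /pref take_size. Qed.

Lemma prefh_rcons y h x : prefh y (rcons h x) =
  if is_leaf P y then None else if x \in Psub y then part y x else prefh y h.
Proof.
rewrite /prefh /pref !take_size; case: (is_leaf P y) => //; rewrite filter_rcons /Psub.
case: (x \in desc P y) => //.
by case: [seq x0 <- h | x0 \in desc P y] => [|a s] //=; rewrite last_rcons.
Qed.

Definition pot (y : V) (p : V -> option V) (l : option V) : nat :=
  (l != None) && (top_part p y != l).

Lemma search_amortized y h x p r ss : st_inv e p -> p r = None -> chain e (p, r) ss ->
  (r = x \/ has (fun s : state V => s.2 == x) ss) ->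
  [&& prefh y h != None, prefh y (rcons h x) != None & prefh y h != prefh y (rcons h x)]
  + pot y (last (p, r) ss).1 (prefh y (rcons h x))
  <= pot y p (prefh y h) + wsum y (p, r) ss.
Proof.
move=> HI Hr Hch Hvis; rewrite prefh_rcons.
have Htc := top_part_changes y Hch; rewrite /= in Htc.
set l := prefh y h; set p' := (last (p, r) ss).1 in Htc *.
case Hleaf: (is_leaf P y).
  have -> : l = None by rewrite /l /prefh /pref Hleaf.
  by rewrite /pot /=.
case HxS: (x \in Psub y); last first.
  rewrite eqxx !andbF add0n /pot; case: (l != None) => //=.
  have := neq_tri (top_part p' y) (top_part p y) l; rewrite eq_sym in Htc.
  by move=> H; apply: leq_trans H _; rewrite addnC; exact: leq_add.
have K := search_part HI Hr Hch Hvis HxS; set i := part y x in K *.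
have T1 := neq_tri l (top_part p y) i.
rewrite /pot; case: (eqVneq l None) => [El|Hl] /=.
  by case: (i != None) => //=; rewrite !add0n; exact: leq_trans (leq_addl _ _) K.
rewrite [l == top_part p y]eq_sym in T1; case: (i != None) => //=.
by apply: leq_trans (leq_add T1 (leqnn _)) _; rewrite -addnA leq_add2l.
Qed.

Lemma search_amortized_sum h x p r ss : st_inv e p -> p r = None -> chain e (p, r) ss ->
  (r = x \/ has (fun s : state V => s.2 == x) ss) ->
  \sum_y ([&& prefh y h != None, prefh y (rcons h x) != None & prefh y h != prefh y (rcons h x)]
          + pot y (last (p, r) ss).1 (prefh y (rcons h x)))
  <= \sum_y pot y p (prefh y h) + 2 * size ss.
Proof.
move=> HI Hr Hch Hvis.
apply: (@leq_trans (\sum_y (pot y p (prefh y h) + wsum y (p, r) ss))).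
  by apply: leq_sum => y _; exact: search_amortized.
by rewrite big_split /= leq_add2l; exact: wsum_total.
Qed.

End Potential.

Section Execution.
Variables (V : finType) (e : rel V) (esym : symmetric e).
Variables (P : V -> option V) (d : V -> V).
Hypothesis HPr : ranked P.
Hypothesis HPc : forall y, connected e (desc P y).
Variable X : seq V.

Definition pref_change (y : V) (t : nat) : nat :=
  [&& pref P d X y t != None, pref P d X y t.+1 != None & pref P d X y t != pref P d X y t.+1].

Lemma exec_amortized p xs c : exec e p xs c -> forall h, X = h ++ xs -> st_inv e p ->
  \sum_y \sum_(size h <= t < size X) pref_change y t
    <= 2 * c + \sum_y pot P d y p (prefh P d y h).
Proof.
elim=> {p xs c} [p|p x xs ss p' c Hs He IH] h EX HI.
  rewrite EX cats0 (eq_bigr (fun _ => 0)); first by rewrite big1_eq.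
  by move=> y _; rewrite big_geq.
case: Hs => r [Hr [Hch [Hvis Ep']]].
have HI' : st_inv e p' by rewrite Ep'; exact: (chain_inv esym Hch HI).
have Hlt : size h < size X by rewrite EX size_cat /= addnS ltnS leq_addr.
have EX' : X = rcons h x ++ xs by rewrite EX cat_rcons.
have := IH _ EX' HI'; rewrite size_rcons => IH'.
have Hacc := search_amortized_sum esym d HPr HPc h HI Hr Hch Hvis; rewrite -Ep' in Hacc.
have Echg y : pref_change y (size h) =
    [&& prefh P d y h != None, prefh P d y (rcons h x) != None
      & prefh P d y h != prefh P d y (rcons h x)].
  rewrite /pref_change !pref_take EX (take_size_cat _ (erefl _)) take_cat ltnNge leqnSn /=.
  by rewrite subSnn /= take0 cats1.
rewrite (eq_bigr (fun y => pref_change y (size h)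
                           + \sum_((size h).+1 <= t < size X) pref_change y t));
  last by move=> y _; rewrite big_ltn.
rewrite big_split /= (eq_bigr _ (fun y _ => Echg y)); rewrite big_split /= in Hacc.
rewrite mulnDr; move: Hacc IH'.
set A := \sum_i _; set B := \sum_i _; set C := \sum_i _; set D := \sum_i _.
lia.
Qed.

Lemma interleave_le_cost p0 c : exec e p0 X c -> st_inv e p0 -> interleave P d X <= 2 * c.
Proof.
move=> He HI; have := exec_amortized He (h := [::]) (erefl _) HI.
rewrite [Y in _ <= _ + Y](eq_bigr (fun _ => 0)); last first.
  by move=> y _; rewrite /pot /prefh /pref; case: (is_leaf P y).
rewrite big1_eq addn0 => H; apply: leq_trans H.
rewrite /interleave; apply: leq_sum => y _; rewrite /ib_node /=.
case: (posnP (size X)) => [->|Hpos]; first by rewrite big_geq.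
by rewrite (@big_ltn _ _ _ 0) // leq_addl.
Qed.

End Execution.

Unset Implicit Arguments.
Import Order.TTheory GRing.Theory Num.Theory.

Theorem theorem1 (V : finType) (e : rel V) (HG : is_tree e)
  (P : V -> option V) (HP : is_st e P)
  (d : V -> V) (Hd : forall y, ~~ is_leaf P y -> P (d y) = Some y)
  (X : seq V) (c : nat) (Hc : gst_cost e X c) :
  ((interleave P d X)%:R / 2 - (#|V|)%:R <= (c%:R : rat))%R.
Proof.
have esym : symmetric e by case: HG.
have [[HPr _] HPc] := search_tree_props HG HP.
case: Hc => p0 [Hp0 He]; have [Hinv0 _] := search_tree_props HG Hp0.
have Hle : (interleave P d X <= 2 * c)%N := interleave_le_cost esym d HPr HPc He Hinv0.
rewrite -(ler_nat rat) natrM in Hle.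
have Hn : (0 <= (#|V|)%:R :> rat)%R by rewrite ler0n.
lra.
Qed.
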